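(* Let $G$ be a $W(K_3)$-free finite simple graph and let $x_1,x_2,x_3$ be three vertices of $G$ which are pairwise adjacent (form a triangle). Then $$\alpha_2\Big(G\setminus \bigcup_{i=1}^3 N_G(x_i)\Big)\geq \alpha_2(G)-2.$$
   Context: For a vertex $x$, $N_G(x)$ is its set of neighbours and $N_G[x]=N_G(x)\cup\{x\}$. For $U\subseteq V(G)$, $G\setminus U$ is the graph with vertex set $V(G)\setminus U$ and edge set $\{e\in E(G): e\cap U=\emptyset\}$. The star with center $x$ is the subgraph with vertex set $N_G[x]$ and edges $\{xy:y\in N_G(x)\}$. A star packing of $G$ is a family of stars of $G$ whose vertex sets are pairwise disjoint; $\alpha_2(G)$, the star packing number, is the maximum size of a star packing of $G$. A whiskered triangle $W(K_3)$ is the graph obtained from a triangle by attaching a pendant edge (to a new vertex of degree one) at each of its three vertices; $G$ is $W(K_3)$-free if it has no induced subgraph isomorphic to $W(K_3)$. *)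

(* Induced subgraphs
   (such as G \ U) are represented by their vertex set V : {set T}; the edges
   are those of e between vertices of V. *)
From mathcomp Require Import all_boot.
Set Implicit Arguments. Unset Strict Implicit. Unset Printing Implicit Defensive.

Section Graphs.
Variables (T : finType) (e : rel T).

Definition simple_graph : Prop := symmetric e /\ irreflexive e.

Definition nbhd (V : {set T}) (x : T) : {set T} := [set y in V | e x y].
Definition cnbhd (V : {set T}) (x : T) : {set T} := x |: nbhd V x.

(* A star packing of H = G[V], given by its set of centres S: the stars
   centred at distinct elements of S have pairwise disjoint vertex sets. *)
Definition star_packing (V S : {set T}) : bool :=
  (S \subset V) &&
  [forall x in S, forall y in S, (x != y) ==> [disjoint cnbhd V x & cnbhd V y]].

Definition alpha2 (V : {set T}) : nat :=
  \max_(S : {set T} | star_packing V S) #|S|.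

Definition gdel (U : {set T}) : {set T} := ~: U.

(* G contains no induced whiskered triangle: no six distinct vertices
   a1 a2 a3 b1 b2 b3 whose induced edges are exactly a_i a_j and a_i b_i. *)
Definition WK3_free : Prop :=
  ~ exists a1 a2 a3 b1 b2 b3 : T,
      uniq [:: a1; a2; a3; b1; b2; b3] /\
      [/\ e a1 a2, e a1 a3 & e a2 a3] /\
      [/\ e a1 b1, e a2 b2 & e a3 b3] /\
      [/\ ~~ e a1 b2, ~~ e a1 b3 & ~~ e a2 b1] /\
      [/\ ~~ e a2 b3, ~~ e a3 b1 & ~~ e a3 b2] /\
      [/\ ~~ e b1 b2, ~~ e b1 b3 & ~~ e b2 b3].
End Graphs.

(* Take a maximum star packing S of G.  Every star centred outside the deleted
   set survives in G \ U with a smaller vertex set, so only the centres adjacent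
   to some x_i are lost.  Each x_i lies in the star of every centre adjacent to
   it, so distinct lost centres are adjacent to distinct x_i.  Three lost
   centres t_i with x_i t_i edges would therefore, with the triangle, span an
   induced whiskered triangle: the disjointness of the stars rules out every
   other edge.  Hence at most two centres are lost. *)
From mathcomp Require Import all_boot.

Set Implicit Arguments.
Unset Strict Implicit.
Unset Printing Implicit Defensive.

Section StarPackings.
Variables (T : finType) (e : rel T).

Lemma cnbhdS (U V : {set T}) x : V \subset U -> cnbhd e V x \subset cnbhd e U x.
Proof.
move=> sVU; apply/subsetP => y; rewrite !inE.
by case/orP=> [-> // | /andP[/(subsetP sVU) -> ->]]; rewrite orbT.
Qed.

Lemma in_cnbhdT s y : (y \in cnbhd e setT s) = (y == s) || e s y.
Proof. by rewrite !inE. Qed.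

Lemma star_packing_disjoint (V S : {set T}) s t :
  star_packing e V S -> s \in S -> t \in S -> s != t ->
  [disjoint cnbhd e V s & cnbhd e V t].
Proof.
case/andP=> _ /forall_inP hS sS tS neq_st.
by have /forall_inP/(_ t tS) := hS s sS; rewrite neq_st.
Qed.

Lemma star_packingI (U V S : {set T}) :
  V \subset U -> star_packing e U S -> star_packing e V (S :&: V).
Proof.
move=> sVU hS; apply/andP; split; first exact: subsetIr.
apply/forall_inP => s /setIP[sS _]; apply/forall_inP => t /setIP[tS _].
apply/implyP => neq_st.
exact: disjointW (cnbhdS s sVU) (cnbhdS t sVU) (star_packing_disjoint hS sS tS neq_st).
Qed.

Lemma star_packing_notin_cnbhd (S : {set T}) s t y :
  star_packing e setT S -> s \in S -> t \in S -> s != t ->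
  y \in cnbhd e setT s -> (y != t) && ~~ e t y.
Proof.
move=> hS sS tS neq_st ys.
by rewrite -negb_or -in_cnbhdT (disjointFr (star_packing_disjoint hS sS tS neq_st) ys).
Qed.

Lemma star_packing_adj_inj (S : {set T}) s t y :
  star_packing e setT S -> s \in S -> t \in S -> e s y -> e t y -> s = t.
Proof.
move=> hS sS tS sy ty; apply/eqP/negPn/negP => neq_st.
have ys : y \in cnbhd e setT s by rewrite in_cnbhdT sy orbT.
by have /andP[_] := star_packing_notin_cnbhd hS sS tS neq_st ys; rewrite ty.
Qed.

Hypotheses (e_sym : symmetric e) (e_irr : irreflexive e).

Lemma adj_neq x y : e x y -> x != y.
Proof. by apply: contraTneq => ->; rewrite e_irr. Qed.

Lemma star_packing_apart (S : {set T}) s t x :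
  star_packing e setT S -> s \in S -> t \in S -> s != t ->
  e x s -> (x != t) && ~~ e x t.
Proof.
move=> hS sS tS neq_st xs; rewrite [e x t]e_sym.
by apply: star_packing_notin_cnbhd hS sS tS neq_st _; rewrite in_cnbhdT e_sym xs orbT.
Qed.

Lemma star_packing_centres_nonadj (S : {set T}) s t :
  star_packing e setT S -> s \in S -> t \in S -> s != t -> ~~ e s t.
Proof.
move=> hS sS tS neq_st.
have tt : t \in cnbhd e setT t by rewrite in_cnbhdT eqxx.
have neq_ts : t != s by rewrite eq_sym.
by case/andP: (star_packing_notin_cnbhd hS tS sS neq_ts tt).
Qed.

Hypothesis e_WK3_free : WK3_free e.

Lemma triangle_not_whiskered_by_packing (S : {set T}) x1 x2 x3 t1 t2 t3 :
  star_packing e setT S -> e x1 x2 -> e x1 x3 -> e x2 x3 ->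
  t1 \in S -> t2 \in S -> t3 \in S -> t1 != t2 -> t1 != t3 -> t2 != t3 ->
  e x1 t1 -> e x2 t2 -> e x3 t3 -> False.
Proof.
move=> hS x12 x13 x23 t1S t2S t3S t12 t13 t23 a1 a2 a3.
have t21 : t2 != t1 by rewrite eq_sym.
have t31 : t3 != t1 by rewrite eq_sym.
have t32 : t3 != t2 by rewrite eq_sym.
have /andP[n12 e12] := star_packing_apart hS t1S t2S t12 a1.
have /andP[n13 e13] := star_packing_apart hS t1S t3S t13 a1.
have /andP[n21 e21] := star_packing_apart hS t2S t1S t21 a2.
have /andP[n23 e23] := star_packing_apart hS t2S t3S t23 a2.
have /andP[n31 e31] := star_packing_apart hS t3S t1S t31 a3.
have /andP[n32 e32] := star_packing_apart hS t3S t2S t32 a3.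
apply: e_WK3_free; exists x1, x2, x3, t1, t2, t3; split.
  rewrite /= !inE !negb_or !(adj_neq x12, adj_neq x13, adj_neq x23).
  by rewrite !(adj_neq a1, adj_neq a2, adj_neq a3) n12 n13 n21 n23 n31 n32 t12 t13 t23.
do !split => //; exact: star_packing_centres_nonadj hS _ _ _.
Qed.

Lemma card_attached_centres_le2 (S A : {set T}) x1 x2 x3 :
  star_packing e setT S -> e x1 x2 -> e x1 x3 -> e x2 x3 ->
  A \subset S -> {in A, forall s, [|| e x1 s, e x2 s | e x3 s]} -> #|A| <= 2.
Proof.
move=> hS x12 x13 x23 sAS attA.
pose X := [set x1; x2; x3].
pose f s := odflt x1 [pick x in X | e x s].
have fP s : s \in A -> f s \in X /\ e (f s) s.
  move=> sA; rewrite /f; case: pickP => [x /andP[] // | noX]; exfalso.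
  by case/or3P: (attA s sA) => [h|h|h];
    [move: (noX x1) | move: (noX x2) | move: (noX x3)]; rewrite !inE eqxx ?orbT h.
have f_inj : {in A &, injective f}.
  move=> s t sA tA eq_f; apply: (star_packing_adj_inj (y := f s) hS).
  - exact: subsetP sAS s sA.
  - exact: subsetP sAS t tA.
  - by rewrite e_sym; case: (fP s sA).
  - by rewrite e_sym eq_f; case: (fP t tA).
rewrite leqNgt; apply/negP => A_gt2.
have fAX : f @: A \subset X by apply/subsetP => _ /imsetP[s sA ->]; case: (fP s sA).
have X_le3 : #|X| <= 3 by rewrite /X -setUA cardsU1 cards2; case: (_ \notin _); case: (_ != _).
have fAE : f @: A = X.
  apply/eqP; rewrite -(geq_leqif (subset_leqif_cards fAX)) card_in_imset //.
  exact: leq_trans X_le3 A_gt2.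
have preim x : x \in X -> exists2 t, t \in A & f t = x /\ e x t.
  rewrite -fAE => /imsetP[t tA ->]; exists t => //; split => //; by case: (fP t tA).
have : [/\ x1 \in X, x2 \in X & x3 \in X] by rewrite !inE !eqxx !orbT.
case=> /preim[t1 t1A [ft1 a1]] /preim[t2 t2A [ft2 a2]] /preim[t3 t3A [ft3 a3]].
have distinct xi xj ti tj : xi != xj -> f ti = xi -> f tj = xj -> ti != tj.
  by move=> neq fi fj; apply: contra_neq neq => eq_t; rewrite -fi -fj eq_t.
apply: (triangle_not_whiskered_by_packing hS x12 x13 x23
  (subsetP sAS _ t1A) (subsetP sAS _ t2A) (subsetP sAS _ t3A) _ _ _ a1 a2 a3).
- exact: distinct (adj_neq x12) ft1 ft2.
- exact: distinct (adj_neq x13) ft1 ft3.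
- exact: distinct (adj_neq x23) ft2 ft3.
Qed.
End StarPackings.

Theorem lemma3p1 (T : finType) (e : rel T) (x1 x2 x3 : T) :
  simple_graph e -> WK3_free e ->
  e x1 x2 -> e x1 x3 -> e x2 x3 ->
  alpha2 e [set: T] <=
    alpha2 e (gdel (nbhd e [set: T] x1 :|: nbhd e [set: T] x2 :|: nbhd e [set: T] x3)) + 2.
Proof.
move=> [e_sym e_irr] e_WK3_free x12 x13 x23.
set V := gdel _.
apply/bigmax_leqP => S hS.
rewrite -(cardsID V S) leq_add //.
  exact/leq_bigmax_cond/(star_packingI (subsetT V) hS).
apply: (card_attached_centres_le2 e_sym e_irr e_WK3_free hS x12 x13 x23 (subsetDl _ _)).
by move=> s /setDP[_]; rewrite /V /gdel !inE negbK orbA.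
Qed.
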